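(* Let $A$ be a commutative ring with $1$, $M\in\operatorname{Sym}_n(A)$, $a\in A$, $v\in A^n$ and $b\in\Sigma(a)$ (with $a$ regarded as a $1\times 1$ matrix). If $av\in\Sigma(M)$, then $b^2v\in\Sigma(M)$.
   Context: $\Sigma A^2$ denotes the set of finite sums of squares in $A$. A matrix $N\in\operatorname{Sym}_n(A)$ is a sum of squares if $N=\sum_{i=1}^m w_iw_i^{t}$ for some column vectors $w_i\in A^n$. For $M\in\operatorname{Sym}_n(A)$, $\Sigma(M)$ is the set of $v\in A^n$ such that $sM=vv^{t}+N$ for some $s\in\Sigma A^2$ and some sum of squares $N\in\operatorname{Sym}_n(A)$. For $n=1$: $b\in\Sigma(a)$ iff $sa=b^2+t$ for some $s,t\in\Sigma A^2$. *)

From HB Require Import structures.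
From mathcomp Require Import all_boot all_order all_algebra.
Set Implicit Arguments. Unset Strict Implicit. Unset Printing Implicit Defensive.
Import GRing.Theory.
Local Open Scope ring_scope.

Definition is_symmx (A : comPzRingType) (n : nat) (M : 'M[A]_n) : Prop := M^T = M.

Definition is_sos (A : comPzRingType) (s : A) : Prop :=
  exists xs : seq A, s = \sum_(x <- xs) x ^+ 2.

Definition is_sos_mx (A : comPzRingType) (n : nat) (N : 'M[A]_n) : Prop :=
  exists ws : seq 'cV[A]_n, N = \sum_(w <- ws) w *m w^T.

Definition inSigma (A : comPzRingType) (n : nat) (M : 'M[A]_n) (v : 'cV[A]_n) : Prop :=
  exists s : A, exists N : 'M[A]_n,
    [/\ is_sos s, is_sos_mx N & s *: M = v *m v^T + N].

(* n = 1 case, b in Sigma(a): s a = b^2 + t. *)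
Definition inSigma1 (A : comPzRingType) (a b : A) : Prop :=
  exists s t : A, [/\ is_sos s, is_sos t & s * a = b ^+ 2 + t].

(* If [s' M = w w^T + N], multiplying by [c^2] gives a certificate for
   [c w], so [Sigma(M)] is stable under scalar multiplication; with [c = s] and
   [s a = b^2 + t] this puts [(b^2 + t) v] in [Sigma(M)].  Expanding
   [(b^2 + t)^2 v v^T = (b^2 v)(b^2 v)^T + (2 b^2 t + t^2) v v^T], the second
   term is a sum of squares and can be absorbed into [N]. *)

From HB Require Import structures.
From mathcomp Require Import all_boot all_order all_algebra.
From mathcomp Require Import ring.
Import GRing.Theory.
Set Implicit Arguments.
Unset Strict Implicit.
Local Open Scope ring_scope.

Section SumsOfSquares.
Variable A : comPzRingType.

Lemma sosD (x y : A) : is_sos x -> is_sos y -> is_sos (x + y).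
Proof. by move=> [xs ->] [ys ->]; exists (xs ++ ys); rewrite big_cat. Qed.

Lemma sos_sqr (x : A) : is_sos (x ^+ 2).
Proof. by exists [:: x]; rewrite big_seq1. Qed.

Lemma sosM (x y : A) : is_sos x -> is_sos y -> is_sos (x * y).
Proof.
move=> [xs ->] [ys ->]; elim: xs => [|z xs [zs Hz]].
  by exists [::]; rewrite !big_nil mul0r.
exists ([seq z * u | u <- ys] ++ zs).
rewrite big_cat big_cons mulrDl Hz big_map mulr_sumr; congr (_ + _).
by apply: eq_bigr => u _; rewrite exprMn.
Qed.

Variable n : nat.

Lemma outerZ (c : A) (w : 'cV[A]_n) :
  (c *: w) *m (c *: w)^T = c ^+ 2 *: (w *m w^T).
Proof. by rewrite linearZ /= -scalemxAl -scalemxAr scalerA. Qed.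

Lemma sosmx_outer (w : 'cV[A]_n) : is_sos_mx (w *m w^T).
Proof. by exists [:: w]; rewrite big_seq1. Qed.

Lemma sosmxD (N1 N2 : 'M[A]_n) :
  is_sos_mx N1 -> is_sos_mx N2 -> is_sos_mx (N1 + N2).
Proof. by move=> [xs ->] [ys ->]; exists (xs ++ ys); rewrite big_cat. Qed.

Lemma sosmxZ (c : A) (N : 'M[A]_n) :
  is_sos c -> is_sos_mx N -> is_sos_mx (c *: N).
Proof.
move=> [xs ->] [ws ->]; elim: xs => [|z xs [zs Hz]].
  by exists [::]; rewrite !big_nil scale0r.
exists ([seq z *: w | w <- ws] ++ zs).
rewrite big_cat big_cons scalerDl Hz big_map scaler_sumr; congr (_ + _).
by apply: eq_bigr => w _; rewrite outerZ.
Qed.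

End SumsOfSquares.

Section Sigma.
Variables (A : comPzRingType) (n : nat) (M : 'M[A]_n).

Lemma inSigmaZ (c : A) (w : 'cV[A]_n) : inSigma M w -> inSigma M (c *: w).
Proof.
move=> [s [N [Hs HN E]]]; exists (c ^+ 2 * s), (c ^+ 2 *: N).
split; [exact: sosM (sos_sqr c) Hs | exact: sosmxZ (sos_sqr c) HN |].
by rewrite -scalerA E scalerDr outerZ.
Qed.

Lemma inSigma_sos_summand (x t : A) (w : 'cV[A]_n) :
  is_sos x -> is_sos t -> inSigma M ((x + t) *: w) -> inSigma M (x *: w).
Proof.
move=> Hx Ht [s [N [Hs HN E]]].
have Hr : is_sos (x * t + x * t + t ^+ 2).
  by apply: sosD; [apply: sosD; exact: sosM | exact: sos_sqr].
exists s, ((x * t + x * t + t ^+ 2) *: (w *m w^T) + N); split => //.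
  by apply: sosmxD => //; apply: sosmxZ => //; exact: sosmx_outer.
rewrite E !outerZ addrA -scalerDl; congr (_ *: _ + _); ring.
Qed.

End Sigma.

Theorem lemma3p9 (A : comPzRingType) (n : nat) (M : 'M[A]_n) (a b : A)
    (v : 'cV[A]_n) :
  is_symmx M -> inSigma1 a b -> inSigma M (a *: v) -> inSigma M (b ^+ 2 *: v).
Proof.
move=> _ [s [t [_ Ht Hsa]]] Hav.
have : inSigma M ((s * a) *: v) by rewrite -scalerA; exact: inSigmaZ.
by rewrite Hsa; apply: inSigma_sos_summand => //; exact: sos_sqr.
Qed.
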